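(* Let $f\in R=D[t;\sigma,\delta]$ be monic of degree $m\ge2$ and irreducible. (i) If $\sigma$ is surjective and $D=\mathrm{Nuc}_r(S_f)$, then $f$ is bounded and $S_f$ is a division algebra. (ii) If $f$ is bounded, then $S_f$ is a division algebra.
   Context: $D$ is an associative division ring, $\sigma$ a ring endomorphism of $D$, $\delta$ a left $\sigma$-derivation. $R=D[t;\sigma,\delta]$ is the skew polynomial ring with $ta=\sigma(a)t+\delta(a)$. For monic $f$ of degree $m$, $S_f$ is the set of polynomials of degree $<m$ with multiplication $g\circ h=$ remainder of $gh$ upon right division by $f$. $\mathrm{Nuc}_r(S_f)=\{x: (yz)x=y(zx)\ \forall y,z\in S_f\}$. $f$ is bounded if there exists $0\neq f^*\in R$ such that $Rf^*=f^*R$ is the largest two-sided ideal of $R$ contained in $Rf$. $f$ irreducible means it is not a unit and has no factorization $f=gh$ with $\deg g,\deg h<\deg f$. $S_f$ is a division algebra if left and right multiplication by every nonzero element are bijective. *)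

(* Carrier: {poly D} (coefficient sequences, a_0 + a_1 t + ... written on the left
   of powers of t); the skew multiplication is defined below. *)
From HB Require Import structures.
From mathcomp Require Import all_boot all_order all_algebra.
Set Implicit Arguments. Unset Strict Implicit. Unset Printing Implicit Defensive.
Import GRing.Theory.
Local Open Scope ring_scope.

Definition division_ring (D : unitRingType) : Prop :=
  forall x : D, x != 0 -> x \is a GRing.unit.

Definition left_sigma_derivation (D : nzRingType) (sigma : D -> D) (delta : {additive D -> D}) : Prop :=
  forall a b : D, delta (a * b) = sigma a * delta b + delta a * b.

Section SkewPoly.
Variables (D : nzRingType) (sigma : {rmorphism D -> D}) (delta : {additive D -> D}).

(* left multiplication by t : t * (sum c_k t^k) = sum (sigma c_k t^(k+1) + delta c_k t^k) *)
Definition tmul (p : {poly D}) : {poly D} :=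
  map_poly sigma p * 'X + map_poly delta p.

Definition smul (p q : {poly D}) : {poly D} :=
  \sum_(i < size p) (p`_i)%:P * iter i tmul q.

(* remainder of right division by f (f monic): g = q f + r, deg r < deg f *)
Fixpoint srem_rec (f : {poly D}) (n : nat) (g : {poly D}) : {poly D} :=
  match n with
  | 0 => g
  | n'.+1 => if (size g < size f)%N then g
             else srem_rec f n' (g - smul (lead_coef g *: 'X^(size g - size f)) f)
  end.

Definition srem (f g : {poly D}) : {poly D} := srem_rec f (size g) g.

Definition inSf (f g : {poly D}) : Prop := (size g < size f)%N.
Definition Sfmul (f g h : {poly D}) : {poly D} := srem f (smul g h).

Definition in_right_nucleus (f x : {poly D}) : Prop :=
  inSf f x /\ forall y z, inSf f y -> inSf f z ->
    Sfmul f (Sfmul f y z) x = Sfmul f y (Sfmul f z x).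

(* D = Nuc_r(S_f), D embedded as constant polynomials *)
Definition nucleus_is_D (f : {poly D}) : Prop :=
  forall x, in_right_nucleus f x <-> (size x <= 1)%N.

Definition Sf_division (f : {poly D}) : Prop :=
  forall a, inSf f a -> a != 0 ->
    (forall b, inSf f b -> exists! x, inSf f x /\ Sfmul f a x = b) /\
    (forall b, inSf f b -> exists! x, inSf f x /\ Sfmul f x a = b).

Definition sunit (f : {poly D}) : Prop :=
  exists g, smul f g = 1 /\ smul g f = 1.

Definition sirreducible (f : {poly D}) : Prop :=
  ~ sunit f /\ ~ exists g h, f = smul g h /\ (size g < size f)%N /\ (size h < size f)%N.

Definition two_sided_ideal (I : {poly D} -> Prop) : Prop :=
  I 0 /\ (forall a b, I a -> I b -> I (a + b)) /\
  (forall r a, I a -> I (smul r a)) /\ (forall r a, I a -> I (smul a r)).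

Definition lideal (g : {poly D}) : {poly D} -> Prop := fun p => exists h, p = smul h g.
Definition rideal (g : {poly D}) : {poly D} -> Prop := fun p => exists h, p = smul g h.

Definition sbounded (f : {poly D}) : Prop :=
  exists fs : {poly D}, fs != 0 /\
    (forall p, lideal fs p <-> rideal fs p) /\
    (forall p, lideal fs p -> lideal f p) /\
    (forall I, two_sided_ideal I -> (forall p, I p -> lideal f p) ->
               forall p, I p -> lideal fs p).

End SkewPoly.

(* Right multiplication by a nonzero a in S_f is injective: if y a lies in R f with
   y <> 0, the annihilator of a modulo R f is a left ideal R g with deg g <= deg y < deg f,
   while a Bezout identity u a + v f = 1 (f is irreducible) shows that R/Rf is spanned over
   D by the X^i a, i < deg g, contradicting dim_D R/Rf = deg f.  Being left D-linear on a
   finite-dimensional space, right multiplication is then bijective.  Left multiplication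
   is only right D-linear.  If f is bounded, R f^* is two-sided, sigma is onto (compare
   leading coefficients in R f^* = f^* R), left multiplication by a on R/R f^* is injective
   by maximality of R f^*, hence surjective, and a right inverse of a modulo R f^*, which is
   contained in R f, solves a x = b in S_f.  In case (i), c in Nuc_r(S_f) for c in D gives
   f c in R f; a dimension count yields y <> 0 with y X^j in R f for all j < deg f, hence
   y R in R f, and the monic generator of {z | z R in R f} is a bound of f. *)

From Pilot Require Import Defs.
From HB Require Import structures.
From mathcomp Require Import all_boot all_order all_algebra.
From Stdlib Require Import Classical.
Set Implicit Arguments. Unset Strict Implicit. Unset Printing Implicit Defensive.
Import GRing.Theory.
Local Open Scope ring_scope.

(** * Linear algebra modulo a subgroup *)

Section LinearAlgebraModulo.
Variables (K : unitRingType) (V : zmodType) (act : K -> V -> V).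
Hypothesis K_division : division_ring K.
Hypothesis actDr : forall a x y, act a (x + y) = act a x + act a y.
Hypothesis actDl : forall a b x, act (a + b) x = act a x + act b x.
Hypothesis actA : forall a b x, act (a * b) x = act a (act b x).
Hypothesis act1 : forall x, act 1 x = x.
Variable U : V -> Prop.
Hypothesis U0 : U 0.
Hypothesis UB : forall x y, U x -> U y -> U (x - y).
Hypothesis Uact : forall a x, U x -> U (act a x).

Lemma actBr a x y : act a (x - y) = act a x - act a y.
Proof. by apply: (addIr (act a y)); rewrite -actDr !subrK. Qed.

Lemma actBl a b x : act (a - b) x = act a x - act b x.
Proof. by apply: (addIr (act b x)); rewrite -actDl !subrK. Qed.

Lemma act0r a : act a 0 = 0.
Proof. by apply: (addIr (act a 0)); rewrite -actDr !add0r. Qed.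

Lemma act0l x : act 0 x = 0.
Proof. by apply: (addIr (act 0 x)); rewrite -actDl !add0r. Qed.

Lemma actNl a x : act (- a) x = - act a x.
Proof. by rewrite -[- a]sub0r actBl act0l sub0r. Qed.

Lemma act_suml (I : Type) (r : seq I) (P : pred I) (F : I -> K) x :
  act (\sum_(i <- r | P i) F i) x = \sum_(i <- r | P i) act (F i) x.
Proof. exact: (big_morph (act^~ x) (fun a b => actDl a b x) (act0l x)). Qed.

Lemma UN x : U x -> U (- x).
Proof. by move=> Ux; rewrite -sub0r; apply: UB. Qed.

Lemma subrBB (x y z t : V) : (x - y) - (z - t) = (x - z) - (y - t).
Proof. by rewrite !opprB !addrA addrAC [in RHS]addrAC (addrAC x). Qed.

(* Linear algebra in the quotient V/U, without forming it: [act] is a left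
   action of the division ring K on V and U an [act]-stable subgroup. *)
Definition comb n (c : 'I_n -> K) (ws : 'I_n -> V) : V := \sum_k act (c k) (ws k).

Definition in_span_mod n (ws : 'I_n -> V) (v : V) := exists c, U (v - comb c ws).

Definition free_mod n (ws : 'I_n -> V) :=
  forall c, U (comb c ws) -> forall k, c k = 0.

Lemma comb_recr n (c : 'I_n.+1 -> K) ws :
  comb c ws = comb (c \o widen_ord (leqnSn n)) (ws \o widen_ord (leqnSn n))
              + act (c ord_max) (ws ord_max).
Proof. by rewrite /comb big_ord_recr. Qed.

Lemma comb_lift n (c : 'I_n.+1 -> K) ws j :
  comb c ws = act (c j) (ws j) + comb (c \o lift j) (ws \o lift j).
Proof. by rewrite /comb (bigD1_ord j). Qed.

Lemma combB n (c d : 'I_n -> K) ws :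
  comb (fun k => c k - d k) ws = comb c ws - comb d ws.
Proof. by rewrite /comb -sumrB; apply: eq_bigr => k _; rewrite actBl. Qed.

Lemma act_comb n a (c : 'I_n -> K) ws : act a (comb c ws) = comb (fun k => a * c k) ws.
Proof.
rewrite /comb (big_morph (act a) (actDr a) (act0r a)).
by apply: eq_bigr => k _; rewrite actA.
Qed.

Lemma in_span_mod_widen n (ws : 'I_n.+1 -> V) c v :
  c ord_max = 0 -> U (v - comb c ws) -> in_span_mod (ws \o widen_ord (leqnSn n)) v.
Proof. by move=> c0; rewrite comb_recr c0 act0l addr0; exists (c \o widen_ord (leqnSn n)). Qed.

Lemma dependent_mod n N (ws : 'I_n -> V) (vs : 'I_N -> V) : (n < N)%N ->
  (forall i, in_span_mod ws (vs i)) ->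
  exists2 c : 'I_N -> K, (exists i, c i != 0) & U (comb c vs).
Proof.
elim: n ws N vs => [|n IHn] ws [//|N] vs ltnN vs_span;
  have [a Ua] := fin_all_exists vs_span.
  exists (fun i => (i == ord0)%:R); first by exists ord0; rewrite eqxx oner_neq0.
  rewrite /comb (bigD1 ord0) //= big1 => [|i /negbTE->]; last exact: act0l.
  by rewrite act1 addr0; have := Ua ord0; rewrite /comb big_ord0 subr0.
have [j aj0|a0] := pickP (fun i => a i ord_max != 0); last first.
  apply: (IHn (ws \o widen_ord (leqnSn n))) => [|i]; first exact: ltnW.
  by apply: in_span_mod_widen (Ua i); apply/eqP/negbFE/a0.
(* [vs j] involves [ws ord_max]; use it to eliminate [ws ord_max] from the others. *)
pose lam i := a (lift j i) ord_max / a j ord_max.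
pose vs' i := vs (lift j i) - act (lam i) (vs j).
have vs'_span i : in_span_mod (ws \o widen_ord (leqnSn n)) (vs' i).
  apply: (@in_span_mod_widen _ _ (fun k => a (lift j i) k - lam i * a j k)).
    by rewrite divrK ?subrr ?K_division.
  rewrite combB -act_comb subrBB -actBr.
  by apply: UB => //; apply: Uact.
have [c' [i' c'i'] Uc'] := IHn _ _ vs' ltnN vs'_span.
exists (fun i => if unlift j i is Some k then c' k else - \sum_k c' k * lam k).
  by exists (lift j i'); rewrite liftK.
rewrite (comb_lift _ _ j) unlift_none /comb /=.
under [X in _ + X]eq_bigr do rewrite liftK.
rewrite actNl act_suml addrC -sumrB.
by under eq_bigr do rewrite actA -actBr.
Qed.

Section InjectiveEndomorphism.
Variable phi : V -> V.
Hypothesis phiD : forall x y, phi (x + y) = phi x + phi y.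
Hypothesis phi_act : forall a x, phi (act a x) = act a (phi x).
Hypothesis phi_inj : forall x, U (phi x) -> U x.

Lemma phi0 : phi 0 = 0.
Proof. by apply: (addIr (phi 0)); rewrite -phiD !add0r. Qed.

Lemma phiN x : phi (- x) = - phi x.
Proof. by apply: (addIr (phi x)); rewrite -phiD !addNr phi0. Qed.

Lemma surj_mod_of_inj n (ws : 'I_n -> V) :
  (forall v, in_span_mod ws v) -> free_mod ws -> forall w, exists v, U (phi v - w).
Proof.
move=> ws_span ws_free w.
pose vs (i : 'I_n.+1) := if unlift ord_max i is Some k then phi (ws k) else w.
have [c [i ci0] Uc] := dependent_mod (ltnSn n) (fun i => ws_span (vs i)).
set S := comb (c \o lift ord_max) ws.
have phiS : comb (c \o lift ord_max) (vs \o lift ord_max) = phi S.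
  rewrite /S /comb (big_morph phi phiD phi0).
  by apply: eq_bigr => k _; rewrite /vs /= liftK phi_act.
rewrite (comb_lift _ _ ord_max) /vs unlift_none phiS in Uc.
have [cmax0|cmax] := eqVneq (c ord_max) 0.
  rewrite cmax0 act0l add0r in Uc.
  move/(_ _ (phi_inj Uc)): ws_free => c0.
  move: ci0; case: (unliftP ord_max i) => [k ->|->]; last by rewrite cmax0 eqxx.
  by have /= -> := c0 k; rewrite eqxx.
exists (- act (c ord_max)^-1 S); rewrite phiN phi_act -opprD.
apply: UN; move/(Uact (c ord_max)^-1): Uc.
by rewrite actDr -actA mulVr ?K_division // act1 addrC.
Qed.

End InjectiveEndomorphism.

End LinearAlgebraModulo.

Section LeftModulesModulo.
Variables (K : unitRingType) (V : lmodType K) (U : V -> Prop).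
Hypothesis K_division : division_ring K.
Hypothesis U0 : U 0.
Hypothesis UB : forall x y, U x -> U y -> U (x - y).
Hypothesis UZ : forall a x, U x -> U (a *: x).

Let scale_actDl a b (x : V) : (a + b) *: x = a *: x + b *: x := scalerDl x a b.
Let scale_actA a b (x : V) : (a * b) *: x = a *: (b *: x) := esym (scalerA a b x).

Lemma dependent_modZ n N (ws : 'I_n -> V) (vs : 'I_N -> V) : (n < N)%N ->
  (forall i, in_span_mod *:%R U ws (vs i)) ->
  exists2 c : 'I_N -> K, (exists i, c i != 0) & U (comb *:%R c vs).
Proof.
by move=> ltnN vs_span; apply: (dependent_mod K_division (@scalerDr _ _) scale_actDl
  scale_actA (@scale1r _ _) UB UZ ltnN vs_span).
Qed.

Lemma free_mod_leqZ n N (ws : 'I_n -> V) (vs : 'I_N -> V) :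
  (forall v, in_span_mod *:%R U ws v) -> free_mod *:%R U vs -> (N <= n)%N.
Proof.
move=> ws_span vs_free; rewrite leqNgt; apply/negP => ltnN.
have [c [i ci0] Uc] := dependent_modZ ltnN (fun i => ws_span (vs i)).
by rewrite (vs_free c Uc) eqxx in ci0.
Qed.

Lemma surj_mod_of_injZ (phi : V -> V) n (ws : 'I_n -> V) :
    (forall x y, phi (x + y) = phi x + phi y) -> (forall a x, phi (a *: x) = a *: phi x) ->
    (forall x, U (phi x) -> U x) ->
    (forall v, in_span_mod *:%R U ws v) -> free_mod *:%R U ws ->
  forall w, exists v, U (phi v - w).
Proof.
by move=> phiD phiZ phi_inj; apply: (surj_mod_of_inj K_division (@scalerDr _ _) scale_actDl
  scale_actA (@scale1r _ _) U0 UB UZ phiD phiZ phi_inj).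
Qed.

End LeftModulesModulo.

(** * Skew polynomial arithmetic *)

Section SkewPolynomials.
Variables (D : unitRingType) (sigma : {rmorphism D -> D}) (delta : {additive D -> D}).
Hypothesis delta_der : left_sigma_derivation sigma delta.
Hypothesis D_division : division_ring D.

Local Notation tmul := (tmul sigma delta).
Local Notation "p ** q" := (smul sigma delta p q) (at level 40, left associativity).
Local Notation srem := (srem sigma delta).
Local Notation srem_rec := (srem_rec sigma delta).
Implicit Types (p q r g h u v w x y : {poly D}) (c : D).

Lemma delta1 : delta 1 = 0.
Proof.
have := delta_der 1 1; rewrite !mulr1 rmorph1 mul1r => /eqP.
by rewrite -subr_eq0 opprD addrA subrr add0r oppr_eq0 => /eqP.
Qed.

Lemma coef_tmul p k :
  (tmul p)`_k = (if k == 0%N then 0 else sigma p`_k.-1) + delta p`_k.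
Proof. by rewrite /Defs.tmul coefD coefMX !coef_map. Qed.

Lemma tmul_is_zmod_morphism : zmod_morphism tmul.
Proof. by move=> p q; rewrite /Defs.tmul !raddfB /= mulrBl opprD addrACA. Qed.

HB.instance Definition _ :=
  GRing.isZmodMorphism.Build {poly D} {poly D} tmul tmul_is_zmod_morphism.

Lemma tmulZ c q : tmul (c *: q) = sigma c *: tmul q + delta c *: q.
Proof.
apply/polyP => k; rewrite coef_tmul [RHS]coefD (coefZ (sigma c)) (coefZ (delta c)).
rewrite coef_tmul (coefZ c) (coefZ c) delta_der mulrDr addrA.
by case: (k == 0%N); rewrite ?mulr0 ?rmorphM.
Qed.

Lemma tmulXn n : tmul 'X^n = 'X^(n.+1).
Proof.
apply/polyP => k; rewrite coef_tmul !coefXn.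
have -> : delta (k == n)%:R = 0 by case: (k == n); rewrite ?delta1 ?raddf0.
by case: k => [|k]; rewrite addr0 // rmorph_nat.
Qed.

Lemma iter_tmulB i : {morph iter i tmul : p q / p - q}.
Proof. by elim: i => // i IHi p q; rewrite !iterS IHi raddfB. Qed.

Lemma smul_is_zmod_morphism p : zmod_morphism (smul sigma delta p).
Proof.
by move=> q r; rewrite /smul -sumrB; apply: eq_bigr => i _; rewrite iter_tmulB mulrBr.
Qed.

HB.instance Definition _ p := GRing.isZmodMorphism.Build {poly D} {poly D}
  (smul sigma delta p) (smul_is_zmod_morphism p).

Lemma smulE n p q : (size p <= n)%N -> p ** q = \sum_(i < n) p`_i *: iter i tmul q.
Proof.
move=> le_p_n; rewrite /smul (big_ord_widen n (fun i => (p`_i)%:P * iter i tmul q)) //.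
rewrite big_mkcond; apply: eq_bigr => i _; rewrite mul_polyC.
by case: ltnP => // /(nth_default 0) ->; rewrite scale0r.
Qed.

Lemma smulDl p1 p2 q : (p1 + p2) ** q = p1 ** q + p2 ** q.
Proof.
set n := maxn (size p1) (size p2).
rewrite (@smulE n) ?(leq_trans (size_polyD _ _)) // (@smulE n p1) ?leq_maxl //.
rewrite (@smulE n p2) ?leq_maxr // -big_split.
by apply: eq_bigr => i _; rewrite coefD scalerDl.
Qed.

Lemma smul0l q : 0 ** q = 0.
Proof. by rewrite /smul size_poly0 big_ord0. Qed.

Lemma smulBl p1 p2 q : (p1 - p2) ** q = p1 ** q - p2 ** q.
Proof. by apply: (addIr (p2 ** q)); rewrite -smulDl !subrK. Qed.

Lemma smul_suml (I : Type) (s : seq I) (P : pred I) (F : I -> {poly D}) q :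
  (\sum_(i <- s | P i) F i) ** q = \sum_(i <- s | P i) F i ** q.
Proof. exact: (big_morph (smul sigma delta ^~ q) (fun a b => smulDl a b q) (smul0l q)). Qed.

Lemma smulZl c p q : (c *: p) ** q = c *: (p ** q).
Proof.
rewrite (@smulE (size p)) ?size_scale_leq // (smulE _ (leqnn _)) scaler_sumr.
by apply: eq_bigr => i _; rewrite coefZ scalerA.
Qed.

Lemma smulCl c q : c%:P ** q = c *: q.
Proof. by rewrite (@smulE 1) ?size_polyC ?leq_b1 // big_ord1 coefC. Qed.

Lemma smul1l q : 1 ** q = q.
Proof. by rewrite smulCl scale1r. Qed.

Lemma smulr1 p : p ** 1 = p.
Proof.
rewrite (smulE _ (leqnn _)).
have iter_tmul1 i : iter i tmul 1 = 'X^i by elim: i => //= i ->; rewrite tmulXn.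
by under eq_bigr do rewrite iter_tmul1; rewrite -poly_def coefK.
Qed.

Lemma smulXnl n q : 'X^n ** q = iter n tmul q.
Proof.
rewrite (smulE _ (leqnn _)) size_polyXn (bigD1 ord_max) //= coefXn eqxx scale1r.
by rewrite big1 ?addr0 // => i; rewrite -val_eqE coefXn /= => /negbTE -> ; rewrite scale0r.
Qed.

Lemma smulXl q : 'X ** q = tmul q.
Proof. by rewrite -(expr1 'X) smulXnl. Qed.

Lemma size_tmul_leq p : (size (tmul p) <= (size p).+1)%N.
Proof.
apply/leq_sizeP => j le_pj; rewrite coef_tmul.
rewrite [p`_j]nth_default ?raddf0 ?addr0 1?ltnW //.
by case: j le_pj => //= j le_pj; rewrite nth_default ?rmorph0.
Qed.

Lemma smul_tmul g r : tmul g ** r = tmul (g ** r).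
Proof.
rewrite (smulE r (size_tmul_leq g)) (smulE _ (leqnn _)).
under eq_bigr do rewrite coef_tmul scalerDl.
rewrite big_split /= big_ord_recl /= scale0r add0r big_ord_recr /=.
rewrite [g`_(size g)]nth_default // raddf0 scale0r addr0 raddf_sum -big_split.
by apply: eq_bigr => i _; rewrite /= tmulZ.
Qed.

Lemma smulA p q r : p ** (q ** r) = p ** q ** r.
Proof.
have smul_iter i g : iter i tmul g ** r = iter i tmul (g ** r).
  by elim: i g => //= i IHi g; rewrite smul_tmul IHi.
rewrite [p ** q](smulE _ (leqnn _)) smul_suml (smulE _ (leqnn _)).
by apply: eq_bigr => i _; rewrite smulZl smul_iter.
Qed.

Lemma lreg_neq0 c : c != 0 -> GRing.lreg c.
Proof. by move/D_division/mulrI. Qed.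

Lemma size_scale_neq0 c p : c != 0 -> size (c *: p) = size p.
Proof. by move/lreg_neq0/lreg_size. Qed.

Lemma lead_coef_scale_neq0 c p : c != 0 -> lead_coef (c *: p) = c * lead_coef p.
Proof. by move/lreg_neq0/lead_coef_lreg. Qed.

Lemma sigma_neq0 c : c != 0 -> sigma c != 0.
Proof.
by move/D_division/(rmorph_unit sigma); apply: contraTneq => ->; rewrite unitr0.
Qed.

Lemma iter_sigma1 k : iter k sigma 1 = 1.
Proof. by elim: k => // k IHk; rewrite iterS IHk rmorph1. Qed.

Lemma coef_tmul_size p : (tmul p)`_(size p) = sigma (lead_coef p).
Proof.
rewrite coef_tmul size_poly_eq0 [p`_(size p)]nth_default // raddf0 addr0.
by case: eqP => [->|//]; rewrite lead_coef0 rmorph0.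
Qed.

Lemma size_tmul p : p != 0 -> size (tmul p) = (size p).+1.
Proof.
move=> p0; apply/eqP; rewrite eqn_leq size_tmul_leq ltnNge.
have lp0 : sigma (lead_coef p) != 0 by rewrite sigma_neq0 ?lead_coef_eq0.
by apply: contraNN lp0 => /leq_sizeP/(_ _ (leqnn _)); rewrite coef_tmul_size => ->.
Qed.

Lemma lead_coef_tmul p : lead_coef (tmul p) = sigma (lead_coef p).
Proof.
have [->|p0] := eqVneq p 0; first by rewrite raddf0 lead_coef0 rmorph0.
by rewrite lead_coefE size_tmul // coef_tmul_size.
Qed.

Lemma size_iter_tmul i p : p != 0 -> size (iter i tmul p) = (size p + i)%N.
Proof.
move=> p0; elim: i => [|i IHi]; first by rewrite addn0.
by rewrite iterS size_tmul -?size_poly_gt0 IHi ?addnS // ltn_addr ?size_poly_gt0.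
Qed.

Lemma lead_coef_iter_tmul i p : lead_coef (iter i tmul p) = iter i sigma (lead_coef p).
Proof. by elim: i => // i IHi; rewrite !iterS lead_coef_tmul IHi. Qed.

Lemma smul_lead p q : p ** q =
  lead_coef p *: iter (size p).-1 tmul q
  + \sum_(i < (size p).-1) p`_i *: iter i tmul q.
Proof.
have [->|p0] := eqVneq p 0; first by rewrite smul0l lead_coef0 scale0r size_poly0 big_ord0 addr0.
by rewrite [in LHS](smulE _ (leqnn _)) [in LHS](polySpred p0) big_ord_recr addrC.
Qed.

Lemma size_lead_term p q n : p != 0 -> q != 0 ->
  size (lead_coef p *: iter n tmul q) = (size q + n)%N.
Proof.
by move=> p0 q0; rewrite size_scale_neq0 ?lead_coef_eq0 // size_iter_tmul.
Qed.

Lemma size_smul_lower p q : p != 0 -> q != 0 ->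
  (size (\sum_(i < (size p).-1) p`_i *: iter i tmul q)%R
     < size (lead_coef p *: iter (size p).-1 tmul q)%R)%N.
Proof.
move=> p0 q0; rewrite size_lead_term //.
case: (size p).-1 => [|n]; first by rewrite big_ord0 size_poly0 addn0 size_poly_gt0.
rewrite addnS ltnS; apply: leq_trans (size_sum _ _ _) _; apply/bigmax_leqP => i _.
by rewrite (leq_trans (size_scale_leq _ _)) // size_iter_tmul // leq_add2l -ltnS.
Qed.

Lemma size_smul p q : p != 0 -> q != 0 -> size (p ** q) = (size p + size q).-1.
Proof.
move=> p0 q0; rewrite smul_lead size_polyDl ?size_smul_lower //.
by rewrite [in RHS](polySpred p0) addSn /= addnC; apply: size_lead_term.
Qed.

Lemma lead_coef_smul p q : p != 0 -> q != 0 ->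
  lead_coef (p ** q) = lead_coef p * iter (size p).-1 sigma (lead_coef q).
Proof.
move=> p0 q0; rewrite smul_lead lead_coefDl ?size_smul_lower //.
by rewrite lead_coef_scale_neq0 ?lead_coef_eq0 // lead_coef_iter_tmul.
Qed.

Lemma size_sub_lead g h : g != 0 -> size h = size g -> lead_coef h = lead_coef g ->
  (size (g - h)%R < size g)%N.
Proof.
move=> g0 sz_h lc_h; rewrite [X in (_ < X)%N](polySpred g0) ltnS.
apply/leq_sizeP => j; rewrite leq_eqVlt => /predU1P [<-|lt_j].
  by rewrite coefB -lead_coefE -sz_h -lead_coefE lc_h subrr.
by rewrite coefB !nth_default ?subrr // ?sz_h (polySpred g0).
Qed.

(** * Remainders modulo a monic polynomial *)

Section RightRemainder.
Variable f : {poly D}.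
Hypothesis f_monic : f \is monic.
Let f_neq0 : f != 0 := monic_neq0 f_monic.

Lemma monomial_neq0 c k : c != 0 -> c *: 'X^k != 0 :> {poly D}.
Proof. by move=> c0; rewrite -size_poly_eq0 size_scale_neq0 ?size_polyXn. Qed.

Lemma size_monomial_smul c k : c != 0 -> size ((c *: 'X^k) ** f) = (size f + k)%N.
Proof.
move=> c0; rewrite size_smul ?monomial_neq0 //.
by rewrite size_scale_neq0 // size_polyXn addSn addnC.
Qed.

Lemma lead_coef_monomial_smul c k : c != 0 -> lead_coef ((c *: 'X^k) ** f) = c.
Proof.
move=> c0; rewrite lead_coef_smul ?monomial_neq0 // (monicP f_monic).
rewrite lead_coef_scale_neq0 // lead_coefXn mulr1 size_scale_neq0 //.
by rewrite size_polyXn /= iter_sigma1 mulr1.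
Qed.

Lemma srem_rec_spec n g : (size g < size f + n)%N ->
  exists q, g = q ** f + srem_rec f n g /\ (size (srem_rec f n g) < size f)%N.
Proof.
elim: n g => [|n IHn] g lt_g /=; first by exists 0; rewrite smul0l add0r -(addn0 (size f)).
case: ltnP => [lt_gf|le_fg]; first by exists 0; rewrite smul0l add0r.
have g0 : g != 0 by rewrite -size_poly_gt0 (leq_trans _ le_fg) // size_poly_gt0.
have lg0 : lead_coef g != 0 by rewrite lead_coef_eq0.
set m := lead_coef g *: 'X^(size g - size f).
have sz_mf : size (m ** f) = size g by rewrite size_monomial_smul // subnKC.
have lt_g' : (size (g - m ** f)%R < size f + n)%N.
  apply: leq_trans (size_sub_lead g0 sz_mf (lead_coef_monomial_smul _ lg0)) _.
  by rewrite -ltnS -addnS.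
have [q [def_g' lt_r]] := IHn _ lt_g'.
by exists (q + m); split => //; rewrite smulDl addrAC -def_g' subrK.
Qed.

Let lt_size_addf g : (size g < size f + size g)%N.
Proof. by rewrite -[X in (X < _)%N]add0n ltn_add2r size_poly_gt0. Qed.

Lemma srem_spec g : exists q, g = q ** f + srem f g.
Proof. by have [q []] := srem_rec_spec (lt_size_addf g); exists q. Qed.

Lemma size_srem g : (size (srem f g) < size f)%N.
Proof. by have [q []] := srem_rec_spec (lt_size_addf g). Qed.

Lemma size_srem_leq g : (size (srem f g) <= (size f).-1)%N.
Proof. by rewrite -ltnS prednK ?size_srem // size_poly_gt0. Qed.

Lemma srem_unique g q r : g = q ** f + r -> (size r < size f)%N -> srem f g = r.
Proof.
move=> def_g lt_r; have [q' def_g'] := srem_spec g.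
have eq_qf : (q - q') ** f = srem f g - r.
  have qf : q ** f = g - r by rewrite def_g addrK.
  have q'f : q' ** f = g - srem f g by rewrite {1}def_g' addrK.
  by rewrite smulBl qf q'f opprB addrC addrA subrK.
have [qq'0|qq'] := eqVneq (q - q') 0.
  by apply/eqP; rewrite -subr_eq0 -eq_qf qq'0 smul0l.
have : (size (srem f g - r)%R < size f)%N.
  by apply: leq_ltn_trans (size_polyD _ _) _; rewrite size_polyN gtn_max size_srem lt_r.
by rewrite -eq_qf size_smul // (polySpred qq') addSn /= ltnNge leq_addl.
Qed.

Lemma srem_small g : (size g < size f)%N -> srem f g = g.
Proof. by apply: (srem_unique (q := 0)); rewrite smul0l add0r. Qed.

Lemma srem_addl q g : srem f (q ** f + g) = srem f g.
Proof.
have [q' def_g] := srem_spec g.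
by apply: (srem_unique (q := q + q')); rewrite ?size_srem // smulDl -addrA -def_g.
Qed.

Lemma srem0 : srem f 0 = 0.
Proof. by rewrite srem_small ?size_poly0 ?size_poly_gt0. Qed.

Lemma srem_lideal q : srem f (q ** f) = 0.
Proof. by rewrite -[q ** f]addr0 srem_addl srem0. Qed.

Lemma sremD g h : srem f (g + h) = srem f g + srem f h.
Proof.
have [q1 def_g] := srem_spec g; have [q2 def_h] := srem_spec h.
apply: (srem_unique (q := q1 + q2)); first by rewrite smulDl {1}def_g {1}def_h addrACA.
by apply: leq_ltn_trans (size_polyD _ _) _; rewrite gtn_max !size_srem.
Qed.

Lemma sremB g h : srem f (g - h) = srem f g - srem f h.
Proof. by apply: (addIr (srem f h)); rewrite -sremD !subrK. Qed.

Lemma sremZ c g : srem f (c *: g) = c *: srem f g.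
Proof.
have [q def_g] := srem_spec g.
apply: (srem_unique (q := c *: q)); first by rewrite smulZl {1}def_g scalerDr.
exact: leq_ltn_trans (size_scale_leq _ _) (size_srem g).
Qed.

Lemma srem_id g : srem f (srem f g) = srem f g.
Proof. exact/srem_small/size_srem. Qed.

Lemma srem_eq0P g : srem f g = 0 <-> lideal sigma delta f g.
Proof.
split=> [g0|[h ->]]; last exact: srem_lideal.
by have [q def_g] := srem_spec g; exists q; rewrite def_g g0 addr0.
Qed.

Lemma srem_smul_eq0 r g : srem f g = 0 -> srem f (r ** g) = 0.
Proof. by move/srem_eq0P=> [h ->]; rewrite smulA srem_lideal. Qed.

Lemma srem_smul_srem y z : srem f (y ** srem f z) = srem f (y ** z).
Proof.
have [q def_z] := srem_spec z.
by rewrite [in RHS]def_z raddfD /= smulA srem_addl.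
Qed.

End RightRemainder.

Lemma inv_lead_coef_neq0 p : p != 0 -> (lead_coef p)^-1 != 0.
Proof. by rewrite invr_eq0 lead_coef_eq0. Qed.

Lemma monic_inv_lead_coefZ p : p != 0 -> (lead_coef p)^-1 *: p \is monic.
Proof.
move=> p0; rewrite monicE lead_coef_scale_neq0 ?inv_lead_coef_neq0 //.
by rewrite mulVr // D_division // lead_coef_eq0.
Qed.

Lemma monic_size_le1 p : p \is monic -> (size p <= 1)%N -> p = 1.
Proof.
move=> p_monic le_p1; have sz : size p = 1%N.
  by apply/anti_leq; rewrite le_p1 size_poly_gt0 monic_neq0.
by rewrite (size1_polyC le_p1) -polyC1 -(monicP p_monic) lead_coefE sz.
Qed.

Lemma left_ideal_monic_generator (P : {poly D} -> Prop) y0 :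
    (forall x y, P x -> P y -> P (x - y)) -> (forall r x, P x -> P (r ** x)) ->
    P y0 -> y0 != 0 ->
  exists g, [/\ g \is monic, P g, (size g <= size y0)%N & forall y, P y -> srem g y = 0].
Proof.
move=> PB PM; have [n] := ubnP (size y0); elim: n y0 => // n IHn y0 lt_y0 Py0 y00.
set g := (lead_coef y0)^-1 *: y0.
have g_monic : g \is monic by apply: monic_inv_lead_coefZ.
have size_g : size g = size y0 by rewrite size_scale_neq0 ?inv_lead_coef_neq0.
have Pg : P g by rewrite /g -smulCl; apply: PM.
have [g_gen|] := classic (forall y, P y -> srem g y = 0); first by exists g; split; rewrite ?size_g.
move=> /not_all_ex_not [y /(imply_to_and (P y)) [Py r0]].
have [q def_y] := srem_spec g_monic y.
have Pr : P (srem g y).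
  have -> : srem g y = y - q ** g by rewrite [in RHS]def_y addrC addKr.
  by apply: PB => //; apply: PM.
have lt_r : (size (srem g y) < n)%N.
  by apply: leq_trans (size_srem g_monic y) _; rewrite size_g.
have [g' [g'_monic Pg' le_g' g'_gen]] := IHn _ lt_r Pr (introN eqP r0).
exists g'; split=> //; apply: leq_trans le_g' (ltnW _).
by rewrite -size_g size_srem.
Qed.

Lemma coef_comb_monomials n (c : 'I_n -> D) (k : 'I_n) :
  (comb *:%R c (fun i => 'X^i))`_k = c k.
Proof.
rewrite /comb coef_sum (bigD1 k) //= coefZ coefXn eqxx mulr1 big1 ?addr0 // => i.
by rewrite coefZ coefXn eq_sym -val_eqE => /negbTE ->; rewrite mulr0.
Qed.

Lemma comb_coef_monomials n p : (size p <= n)%N ->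
  comb *:%R (fun i : 'I_n => p`_i) (fun i => 'X^i) = p.
Proof. by move=> le_pn; rewrite -[RHS](take_poly_id le_pn) /take_poly poly_def. Qed.

Section Modulus.
Variable f : {poly D}.
Hypothesis f_monic : f \is monic.
Let f_neq0 : f != 0 := monic_neq0 f_monic.

Local Notation Uf := (fun p => srem f p = 0).
Local Notation monomials_f := (fun i : 'I_(size f).-1 => 'X^i).

Lemma Uf_sub x y : Uf x -> Uf y -> Uf (x - y).
Proof. by move=> /= x0 y0; rewrite sremB // x0 y0 subrr. Qed.

Lemma Uf_scale c x : Uf x -> Uf (c *: x).
Proof. by move=> /= x0; rewrite sremZ // x0 scaler0. Qed.

Lemma inSfB x y : inSf f x -> inSf f y -> inSf f (x - y).
Proof.
rewrite /inSf => lt_xf lt_yf.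
by apply: leq_ltn_trans (size_polyD _ _) _; rewrite size_polyN gtn_max lt_xf lt_yf.
Qed.

Lemma monomials_span v : in_span_mod *:%R Uf monomials_f v.
Proof.
exists (fun i => (srem f v)`_i).
by rewrite /= comb_coef_monomials ?size_srem_leq // (sremB f_monic) srem_id ?subrr.
Qed.

Lemma monomials_free : free_mod *:%R Uf monomials_f.
Proof.
move=> c /= c0 k; rewrite -coef_comb_monomials -[comb _ _ _](srem_small f_monic) ?c0 ?coef0 //.
apply: (@leq_ltn_trans (size f).-1); last by rewrite ltn_predL size_poly_gt0.
apply: leq_trans (size_sum _ _ _) _; apply/bigmax_leqP => i _.
by rewrite (leq_trans (size_scale_leq _ _)) // size_polyXn.
Qed.

(** * Irreducible moduli *)

Section Irreducible.
Hypothesis f_irr : sirreducible sigma delta f.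

Lemma irreducible_bezout x : x != 0 -> (size x < size f)%N ->
  exists u v, u ** x + v ** f = 1.
Proof.
move=> x0 lt_xf; pose P p := exists u v, p = u ** x + v ** f.
have PB a b : P a -> P b -> P (a - b).
  move=> [u1 [v1 ->]] [u2 [v2 ->]]; exists (u1 - u2), (v1 - v2).
  by rewrite !smulBl opprD addrACA.
have PM r a : P a -> P (r ** a).
  by move=> [u [v ->]]; exists (r ** u), (r ** v); rewrite raddfD /= !smulA.
have Px : P x by exists 1, 0; rewrite smul1l smul0l addr0.
have [g [g_monic [u [v def_g]] le_gx g_gen]] := left_ideal_monic_generator PB PM Px x0.
have [h def_f] : lideal sigma delta g f.
  by apply/(srem_eq0P g_monic)/g_gen; exists 0, 1; rewrite smul0l smul1l add0r.
suff g1 : g = 1 by exists u, v; rewrite -def_g g1.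
apply: (monic_size_le1 g_monic); rewrite leqNgt; apply/negP => lt1g.
have h0 : h != 0 by apply: contra_neq f_neq0 => h0; rewrite def_f h0 smul0l.
apply: f_irr.2; exists h, g; split=> //; split; last exact: leq_ltn_trans le_gx lt_xf.
rewrite def_f (size_smul h0 (monic_neq0 g_monic)).
by case: (size g) lt1g => [|[|n]] // _; rewrite !addnS ltnS leq_addr.
Qed.

Lemma Sfmul_eq0 y x : inSf f y -> inSf f x ->
  Sfmul sigma delta f y x = 0 -> y = 0 \/ x = 0.
Proof.
rewrite /inSf /Sfmul => lt_yf lt_xf yx0.
have [->|x0] := eqVneq x 0; [by right | left]; apply/eqP/contraT => y0.
pose P p := srem f (p ** x) = 0.
have PB a b : P a -> P b -> P (a - b) by rewrite /P smulBl; apply: Uf_sub.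
have PM r a : P a -> P (r ** a) by rewrite /P -smulA; apply: srem_smul_eq0.
(* R/Rf would be spanned by the X^i x, i < deg g, where R g is the annihilator of x. *)
have [g [g_monic Pg le_gy g_gen]] := left_ideal_monic_generator PB PM yx0 y0.
have [u [w uxwf1]] := irreducible_bezout x0 lt_xf.
have span v : in_span_mod *:%R Uf (fun i : 'I_(size g).-1 => 'X^i ** x) v.
  have [q def_vu] := srem_spec g_monic (v ** u); set r := srem g _ in def_vu.
  exists (fun i => r`_i); rewrite /comb; under eq_bigr do rewrite smulXnl.
  rewrite -smulE ?(size_srem_leq g_monic) //.
  have -> : v - r ** x = q ** (g ** x) + (v ** w) ** f.
    by rewrite -{1}[v]smulr1 -uxwf1 raddfD /= !smulA def_vu smulDl addrAC addrK -smulA.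
  by rewrite /= (sremD f_monic) (srem_smul_eq0 f_monic _ Pg) (srem_lideal f_monic) addr0.
have : ((size g).-1 < (size f).-1)%N.
  by rewrite ltn_predRL prednK ?size_poly_gt0 ?monic_neq0 // (leq_ltn_trans le_gy).
by rewrite ltnNge (free_mod_leqZ D_division Uf_sub Uf_scale span monomials_free).
Qed.

Lemma srem_lcancel a z : inSf f a -> a != 0 -> srem f (a ** z) = 0 -> srem f z = 0.
Proof.
move=> lt_af a0; rewrite -(srem_smul_srem f_monic) => az0.
have [a0'|//] := Sfmul_eq0 lt_af (size_srem f_monic z) az0.
by rewrite a0' eqxx in a0.
Qed.

Lemma Sf_rmul_surj a b : inSf f a -> a != 0 -> inSf f b ->
  exists y, inSf f y /\ Sfmul sigma delta f y a = b.
Proof.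
move=> lt_af a0 lt_bf; pose phi y := srem f (srem f y ** a).
have phiD y z : phi (y + z) = phi y + phi z.
  by rewrite /phi (sremD f_monic) smulDl (sremD f_monic).
have phi_act c y : phi (c *: y) = c *: phi y.
  by rewrite /phi (sremZ f_monic) smulZl (sremZ f_monic).
have phi_inj y : Uf (phi y) -> Uf y.
  rewrite /= /phi (srem_id f_monic) => phiy0.
  have [//|a0'] := Sfmul_eq0 (size_srem f_monic y) lt_af phiy0.
  by rewrite a0' eqxx in a0.
have [v /= phiv_b] := surj_mod_of_injZ D_division (srem0 f_monic) Uf_sub Uf_scale
  phiD phi_act phi_inj monomials_span monomials_free b.
exists (srem f v); split; first exact: size_srem.
move: phiv_b; rewrite (sremB f_monic) (srem_id f_monic) (srem_small f_monic lt_bf).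
by move/eqP; rewrite subr_eq0 => /eqP.
Qed.

Lemma Sf_division_of_lmul_surj :
    (forall a b, inSf f a -> a != 0 -> exists x, srem f (a ** x) = srem f b) ->
  Sf_division sigma delta f.
Proof.
move=> lmul_surj a lt_af a0; split=> b lt_bf.
  have [x ax_b] := lmul_surj a b lt_af a0.
  exists (srem f x); split.
    split; first exact: size_srem.
    by rewrite /Sfmul (srem_smul_srem f_monic) ax_b (srem_small f_monic lt_bf).
  move=> x' [lt_x'f]; rewrite /Sfmul => ax'_b; apply/eqP; rewrite -subr_eq0; apply/eqP.
  have axx'0 : Sfmul sigma delta f a (srem f x - x') = 0.
    rewrite /Sfmul raddfB (sremB f_monic) (srem_smul_srem f_monic) ax_b.
    by rewrite ax'_b (srem_small f_monic lt_bf) subrr.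
  have [a0'|//] := Sfmul_eq0 lt_af (inSfB (size_srem f_monic x) lt_x'f) axx'0.
  by rewrite a0' eqxx in a0.
have [y [lt_yf ya_b]] := Sf_rmul_surj lt_af a0 lt_bf.
exists y; split=> // y' [lt_y'f]; move: ya_b; rewrite /Sfmul => ya_b y'a_b.
apply/eqP; rewrite -subr_eq0; apply/eqP.
have yy'a0 : Sfmul sigma delta f (y - y') a = 0.
  by rewrite /Sfmul smulBl (sremB f_monic) ya_b y'a_b subrr.
have [//|a0'] := Sfmul_eq0 (inSfB lt_yf lt_y'f) lt_af yy'a0.
by rewrite a0' eqxx in a0.
Qed.

End Irreducible.

End Modulus.

(** * Bounded moduli *)

Lemma iter_sigma0 k : iter k sigma 0 = 0.
Proof. by elim: k => // k IHk; rewrite iterS IHk rmorph0. Qed.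

Lemma iter_sigma_eq0 k c : (iter k sigma c == 0) = (c == 0).
Proof.
have [->|c0] := eqVneq c 0; first by rewrite iter_sigma0 eqxx.
by apply/negbTE; elim: k => // k IHk; rewrite iterS sigma_neq0.
Qed.

Lemma size_Xn_smulC i c : (size ('X^i ** c%:P) <= i.+1)%N.
Proof.
have [->|c0] := eqVneq c 0; first by rewrite raddf0 size_poly0.
by rewrite smulXnl size_iter_tmul ?polyC_eq0 // size_polyC c0.
Qed.

Lemma coef_Xn_smulC i c : ('X^i ** c%:P)`_i = iter i sigma c.
Proof.
have [->|c0] := eqVneq c 0; first by rewrite raddf0 coef0 iter_sigma0.
have cP0 : c%:P != 0 by rewrite polyC_eq0.
rewrite smulXnl -[c in RHS]lead_coefC -lead_coef_iter_tmul lead_coefE.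
by rewrite size_iter_tmul // size_polyC c0.
Qed.

Lemma right_monomials_free k (c : 'I_k -> D) :
  \sum_(i < k) 'X^i ** (c i)%:P = 0 -> forall i, c i = 0.
Proof.
elim: k c => [|k IHk] c sum0 i; first by case: i.
move: sum0; rewrite big_ord_recr /= => sum0.
have ck0 : c ord_max = 0.
  apply/eqP; rewrite -(iter_sigma_eq0 k) -coef_Xn_smulC.
  have := congr1 (fun p => p`_k) sum0; rewrite coef0 coefD nth_default ?add0r => [->//|].
  apply: leq_trans (size_sum _ _ _) _; apply/bigmax_leqP => j _.
  exact: leq_trans (size_Xn_smulC _ _) (ltn_ord j).
rewrite ck0 polyC0 raddf0 addr0 in sum0.
case: (unliftP ord_max i) => [j ->|->//].
rewrite (_ : lift ord_max j = widen_ord (leqnSn k) j); last exact/val_inj/lift_max.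
exact: (IHk (fun j => c (widen_ord (leqnSn k) j))).
Qed.

Section SurjectiveSigma.
Hypothesis sigma_surj : forall c, exists a, sigma a = c.

Lemma iter_sigma_surj k c : exists a, iter k sigma a = c.
Proof.
elim: k c => [|k IHk] c; first by exists c.
by have [b <-] := sigma_surj c; have [a <-] := IHk b; exists a; rewrite iterS.
Qed.

Lemma right_monomial_expansion k p : (size p <= k)%N ->
  exists c : 'I_k -> D, p = \sum_(i < k) 'X^i ** (c i)%:P.
Proof.
elim: k p => [|k IHk] p le_pk.
  by exists (fun _ => 0); rewrite big_ord0; apply/size_poly_leq0P.
have [e he] := iter_sigma_surj k p`_k.
have le_p'k : (size (p - 'X^k ** e%:P)%R <= k)%N.
  apply/leq_sizeP => j; rewrite leq_eqVlt => /predU1P [<-|lt_kj].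
    by rewrite coefB coef_Xn_smulC he subrr.
  by rewrite coefB !nth_default ?subrr // (leq_trans _ lt_kj) // size_Xn_smulC.
have [c def_p'] := IHk _ le_p'k.
exists (fun i => if unlift ord_max i is Some j then c j else e).
rewrite (bigD1_ord ord_max) // unlift_none.
under eq_bigr do rewrite liftK lift_max.
by rewrite -def_p' /= addrC subrK.
Qed.

Lemma right_division g p : g \is monic ->
  exists q r, p = g ** q + r /\ (size r < size g)%N.
Proof.
move=> g_monic; have g0 := monic_neq0 g_monic.
have [n] := ubnP (size p); elim: n p => // n IHn p lt_pn.
have [lt_pg|le_gp] := ltnP (size p) (size g); first by exists 0, p; rewrite raddf0 add0r.
have p0 : p != 0 by rewrite -size_poly_gt0 (leq_trans _ le_gp) // size_poly_gt0.
have [e he] := iter_sigma_surj (size g).-1 (lead_coef p).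
have e0 : e != 0 by rewrite -(iter_sigma_eq0 (size g).-1) he lead_coef_eq0.
set m := e *: 'X^(size p - size g).
have sz_gm : size (g ** m) = size p.
  rewrite size_smul ?monomial_neq0 // size_scale_neq0 // size_polyXn addnS /=.
  by rewrite subnKC.
have lc_gm : lead_coef (g ** m) = lead_coef p.
  rewrite lead_coef_smul ?monomial_neq0 // (monicP g_monic) mul1r.
  by rewrite lead_coef_scale_neq0 // lead_coefXn mulr1.
have lt_p'n : (size (p - g ** m)%R < n)%N.
  by apply: leq_trans (size_sub_lead p0 sz_gm lc_gm) _; rewrite -ltnS.
have [q [r [def_p' lt_rg]]] := IHn _ lt_p'n.
by exists (q + m), r; rewrite raddfD /= addrAC -def_p' subrK.
Qed.

Lemma lmul_surj_mod g a : g \is monic -> (forall c, srem g (g ** c%:P) = 0) ->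
    (forall y, srem g (a ** y) = 0 -> srem g y = 0) ->
  forall w, exists v, srem g (a ** v - w) = 0.
Proof.
move=> g_monic gC a_inj w.
(* Left multiplication by [a] is linear for the right action of D, for which R/Rg
   has basis 1, X, ..., X^(deg g - 1) since sigma is onto. *)
pose ract (c : D^c) p := p ** (c : D)%:P.
have ractDr c p q : ract c (p + q) = ract c p + ract c q by apply: smulDl.
have ractDl (c1 c2 : D^c) p : ract (c1 + c2) p = ract c1 p + ract c2 p.
  by rewrite /ract polyCD raddfD.
have ractA (c1 c2 : D^c) p : ract (c1 * c2) p = ract c1 (ract c2 p).
  by rewrite /ract -smulA smulCl -mul_polyC -polyCM.
have ract1 p : ract 1 p = p by rewrite /ract smulr1.
have Ug_sub p q : srem g p = 0 -> srem g q = 0 -> srem g (p - q) = 0.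
  by move=> p0 q0; rewrite (sremB g_monic) p0 q0 subrr.
have Ug_ract c p : srem g p = 0 -> srem g (ract c p) = 0.
  by move/(srem_eq0P g_monic) => [h ->]; rewrite /ract -smulA (srem_smul_eq0 g_monic).
have sum_ract n (c : 'I_n -> D) : comb ract c (fun i => 'X^i) = \sum_(i < n) 'X^i ** (c i)%:P.
  by [].
have span v : in_span_mod ract (fun p => srem g p = 0) (fun i : 'I_(size g).-1 => 'X^i) v.
  have [c def_v] := right_monomial_expansion (size_srem_leq g_monic v).
  by exists c; rewrite sum_ract -def_v (sremB g_monic) (srem_id g_monic) subrr.
have free : free_mod ract (fun p => srem g p = 0) (fun i : 'I_(size g).-1 => 'X^i).
  move=> c; rewrite sum_ract (srem_small g_monic) => [/right_monomials_free//|].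
  apply: (@leq_ltn_trans (size g).-1); last by rewrite ltn_predL size_poly_gt0 monic_neq0.
  apply: leq_trans (size_sum _ _ _) _; apply/bigmax_leqP => i _.
  exact: leq_trans (size_Xn_smulC _ _) (ltn_ord i).
have a_ract c y : a ** ract c y = ract c (a ** y) by rewrite /ract smulA.
exact: (surj_mod_of_inj (D_division : division_ring D^c) ractDr ractDl ractA ract1
  (srem0 g_monic) Ug_sub Ug_ract (raddfD _) a_ract a_inj span free).
Qed.

End SurjectiveSigma.

(* The largest two-sided ideal inside R f; a bound f^* of f generates it. *)
Definition bound_ideal f z := forall s, srem f (z ** s) = 0.

Section BoundIdeal.
Variable f : {poly D}.
Hypothesis f_monic : f \is monic.

Lemma bound_ideal_two_sided : two_sided_ideal sigma delta (bound_ideal f).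
Proof.
split; first by move=> s; rewrite smul0l (srem0 f_monic).
split; first by move=> a b a0 b0 s; rewrite smulDl (sremD f_monic) a0 b0 addr0.
split=> r a a0 s; rewrite -smulA //.
exact: (srem_smul_eq0 f_monic).
Qed.

Lemma bound_ideal_sub z : bound_ideal f z -> lideal sigma delta f z.
Proof. by move/(_ 1); rewrite smulr1 => /(srem_eq0P f_monic). Qed.

Lemma bound_ideal_max (I : {poly D} -> Prop) : two_sided_ideal sigma delta I ->
  (forall p, I p -> lideal sigma delta f p) -> forall p, I p -> bound_ideal f p.
Proof.
move=> [_ [_ [_ IR]]] I_sub p Ip s.
by apply/(srem_eq0P f_monic)/I_sub/IR.
Qed.

End BoundIdeal.

Lemma sigma_surj_of_invariant g : g != 0 -> (1 < size g)%N ->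
  (forall p, lideal sigma delta g p -> rideal sigma delta g p) -> forall c, exists a, sigma a = c.
Proof.
move=> g0 g_gt1 gLR e; have [->|e0] := eqVneq e 0; first by exists 0; rewrite rmorph0.
(* Compare leading coefficients in (l e l^-1) g = g h, where l = lead_coef g. *)
set l := lead_coef g; have l0 : l != 0 by rewrite lead_coef_eq0.
have le0 : l * e / l != 0.
  apply: contraTneq (_ : l * e / l \is a GRing.unit) => [->|]; first by rewrite unitr0.
  by rewrite !unitrMl ?unitrV ?D_division.
have [h def_g] := gLR ((l * e / l)%:P ** g) (ex_intro _ _ erefl).
have h0 : h != 0.
  apply: contra_neq g0 => h0; apply/eqP; rewrite -size_poly_eq0 -(size_scale_neq0 g le0).
  by rewrite -smulCl def_g h0 raddf0 size_poly0.
have := congr1 lead_coef def_g; rewrite smulCl lead_coef_scale_neq0 // divrK ?D_division //.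
rewrite lead_coef_smul // => /(lreg_neq0 l0) ->.
by case: (size g) g_gt1 => [|[|k]] // _; exists (iter k sigma (lead_coef h)).
Qed.

Lemma monic_bound_of_sbounded f : f \is monic -> (1 < size f)%N -> sbounded sigma delta f ->
  (forall c, exists a, sigma a = c) /\
  exists2 g, g \is monic & [/\ forall p, srem g p = 0 -> srem f p = 0,
    forall p s, srem g p = 0 -> srem g (p ** s) = 0
    & forall p, bound_ideal f p -> srem g p = 0].
Proof.
move=> f_monic f_gt1 [fs [fs0 [fsLR [fs_sub fs_max]]]].
have size_fs : (1 < size fs)%N.
  have [h def_fs] := fs_sub fs (ex_intro _ 1 (esym (smul1l fs))).
  have h0 : h != 0 by apply: contra_neq fs0 => h0; rewrite def_fs h0 smul0l.
  rewrite def_fs (size_smul h0 (monic_neq0 f_monic)); apply: leq_trans f_gt1 _.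
  by rewrite (polySpred h0) addSn leq_addl.
split; first exact: sigma_surj_of_invariant fs0 size_fs (fun p => (fsLR p).1).
set l := lead_coef fs; have l0 : l != 0 by rewrite lead_coef_eq0.
set g := l^-1 *: fs; have g_monic : g \is monic by apply: monic_inv_lead_coefZ.
have fs_g : fs = l%:P ** g by rewrite smulCl /g scalerA mulrV ?D_division // scale1r.
have Rg_Rfs p : srem g p = 0 <-> lideal sigma delta fs p.
  rewrite srem_eq0P //; split=> [[h ->]|[h ->]].
    by exists (h ** (l^-1)%:P); rewrite -smulA smulCl.
  by exists (h ** l%:P); rewrite fs_g smulA.
exists g => //; split=> [p /Rg_Rfs/fs_sub/(srem_eq0P f_monic)//|p s|p Ip].
  move/Rg_Rfs=> [h ->]; rewrite -smulA (srem_smul_eq0 g_monic) //.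
  by apply/Rg_Rfs/fsLR; exists s.
by apply/Rg_Rfs/(fs_max _ (bound_ideal_two_sided f_monic) (bound_ideal_sub f_monic)).
Qed.

Lemma Sf_division_of_bounded f : f \is monic -> (1 < size f)%N ->
  sirreducible sigma delta f -> sbounded sigma delta f -> Sf_division sigma delta f.
Proof.
move=> f_monic f_gt1 f_irr /(monic_bound_of_sbounded f_monic f_gt1).
move=> [sigma_surj [g g_monic [Rg_Rf Rg_smul bound_Rg]]].
apply: (Sf_division_of_lmul_surj f_monic f_irr) => a b lt_af a0.
have a_inj y : srem g (a ** y) = 0 -> srem g y = 0.
  move=> ay0; apply: bound_Rg => s; apply: (srem_lcancel f_monic f_irr lt_af a0).
  by rewrite smulA; apply/Rg_Rf/Rg_smul.
have gC c : srem g (g ** c%:P) = 0.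
  by apply: Rg_smul; rewrite -{2}[g]smul1l (srem_lideal g_monic).
have [c ac1] := lmul_surj_mod sigma_surj g_monic gC a_inj 1.
exists (c ** b); apply/eqP; rewrite -subr_eq0 -(sremB f_monic) smulA.
by rewrite -[X in _ - X]smul1l -smulBl; apply/eqP/Rg_Rf/Rg_smul.
Qed.

Lemma srem_smulC_of_right_nucleus f c : f \is monic -> (2 < size f)%N ->
  in_right_nucleus sigma delta f c%:P -> srem f (f ** c%:P) = 0.
Proof.
move=> f_monic f_gt2 [_ nuc]; have f0 := monic_neq0 f_monic.
have [m size_f] : exists m, size f = m.+2 by exists (size f).-2; case: (size f) f_gt2 => [|[|]].
have sremXm : srem f 'X^(m.+1) = 'X^(m.+1) - f.
  apply: (srem_unique f_monic (q := 1)); first by rewrite smul1l addrC subrK.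
  rewrite -opprB size_polyN size_sub_lead // ?size_polyXn ?size_f //.
  by rewrite lead_coefXn (monicP f_monic).
(* Associativity (X o X^m) o c = X o (X^m o c), with X o X^m = X^(m+1) - f. *)
have X_Sf : inSf f 'X by rewrite /inSf size_polyX.
have Xm_Sf : inSf f 'X^m by rewrite /inSf size_polyXn size_f.
move: (nuc _ _ X_Sf Xm_Sf); rewrite /Sfmul (srem_smul_srem f_monic) smulA smulXl tmulXn.
rewrite sremXm smulBl (sremB f_monic) => /eqP.
by rewrite -subr_eq0 addrAC subrr add0r oppr_eq0 => /eqP.
Qed.

Lemma exists_monomials_annihilator f n : f \is monic ->
  exists2 y, y != 0 & forall j : 'I_n, srem f (y ** 'X^j) = 0.
Proof.
move=> f_monic; pose m := (size f).-1.
(* [Phi] is linear with values in a space of dimension n * m, so some nonzero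
   combination of the n * m + 1 monomials X^l lies in its kernel. *)
pose A y : 'M[D]_(n, m) := \matrix_(j, i) (srem f (y ** 'X^j))`_i.
pose Phi y := mxvec (A y).
have PhiD y z : Phi (y + z) = Phi y + Phi z.
  rewrite /Phi -raddfD; congr mxvec; apply/matrixP => j i.
  by rewrite !mxE smulDl (sremD f_monic) coefD.
have PhiZ c y : Phi (c *: y) = c *: Phi y.
  rewrite /Phi -linearZ; congr mxvec; apply/matrixP => j i.
  by rewrite !mxE smulZl (sremZ f_monic) coefZ.
have Phi0 : Phi 0 = 0 by apply: (addIr (Phi 0)); rewrite -PhiD !add0r.
have UB (u v : 'rV[D]_(n * m)) : u = 0 -> v = 0 -> u - v = 0 by move=> -> ->; rewrite subrr.
have UZ c (u : 'rV[D]_(n * m)) : u = 0 -> c *: u = 0 by move=> ->; rewrite scaler0.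
have span (l : 'I_(n * m).+1) :
    in_span_mod *:%R (fun u : 'rV[D]_(n * m) => u = 0) (fun k => 'e_k) (Phi 'X^l).
  by exists (fun k => Phi 'X^l 0 k); rewrite /comb -row_sum_delta subrr.
have [c [l cl0] Phi_y] := dependent_modZ D_division UB UZ (ltnSn (n * m)) span.
exists (comb *:%R c (fun l => 'X^l)).
  by apply: contra_neq cl0 => y0; rewrite -coef_comb_monomials y0 coef0.
move=> j; set y := comb _ _ _.
have Ay0 : A y = 0.
  apply/eqP; rewrite -mxvec_eq0 -/(Phi y); apply/eqP; rewrite -Phi_y /comb.
  by rewrite (big_morph Phi PhiD Phi0); apply: eq_bigr => k _; rewrite PhiZ.
apply/polyP => i; rewrite coef0; have [lt_im|le_mi] := ltnP i m.
  by have := congr1 (fun B : 'M[D]_(n, m) => B j (Ordinal lt_im)) Ay0; rewrite !mxE.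
by rewrite nth_default // (leq_trans (size_srem_leq f_monic _)).
Qed.

Lemma sbounded_of_srem_smulC f : f \is monic -> (forall c, exists a, sigma a = c) ->
  (forall c, srem f (f ** c%:P) = 0) -> sbounded sigma delta f.
Proof.
move=> f_monic sigma_surj fC.
have [_ [_ [IL IR]]] := bound_ideal_two_sided f_monic.
have IB a b : bound_ideal f a -> bound_ideal f b -> bound_ideal f (a - b).
  by move=> Ia Ib s; rewrite smulBl (sremB f_monic) Ia Ib subrr.
have [y y0 yX0] := exists_monomials_annihilator (size f).-1 f_monic.
have Iy : bound_ideal f y.
  move=> s; have [q def_s] := srem_spec f_monic s.
  rewrite def_s raddfD /= smulA (srem_addl f_monic).
  have [c ->] := right_monomial_expansion sigma_surj (size_srem_leq f_monic s).
  rewrite raddf_sum /=.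
  apply: (big_ind (fun p => srem f p = 0)) => [|p1 p2 p1_0 p2_0|j _]; first exact: srem0.
    by rewrite (sremD f_monic) p1_0 p2_0 addr0.
  have [h def_yX] := (srem_eq0P f_monic _).1 (yX0 j).
  by rewrite smulA def_yX -smulA (srem_smul_eq0 f_monic _ (fC _)).
have [g [g_monic Ig _ g_gen]] := left_ideal_monic_generator IB IL Iy y0.
exists g; split; first exact: monic_neq0.
split.
  move=> p; split=> [[h ->]|[h ->]]; last exact/(srem_eq0P g_monic)/g_gen/IR.
  have [q [r [def_hg lt_rg]]] := right_division sigma_surj (h ** g) g_monic.
  have Ir : bound_ideal f r.
    have -> : r = h ** g - g ** q by rewrite def_hg addrAC subrr add0r.
    exact: IB (IL _ _ Ig) (IR _ _ Ig).
  by exists q; rewrite def_hg -(srem_small g_monic lt_rg) g_gen // addr0.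
split=> [p [h ->]|J J2 J_sub p Jp]; first exact/(bound_ideal_sub f_monic)/IL.
exact/(srem_eq0P g_monic)/g_gen/(bound_ideal_max f_monic J2 J_sub).
Qed.

End SkewPolynomials.

Theorem mainTheorem10 (D : unitRingType) (sigma : {rmorphism D -> D})
  (delta : {additive D -> D}) (f : {poly D}) (m : nat) :
  division_ring D ->
  left_sigma_derivation sigma delta ->
  f \is monic -> size f = m.+1 -> (2 <= m)%N ->
  sirreducible sigma delta f ->
  ((forall b : D, exists a : D, sigma a = b) ->
     nucleus_is_D sigma delta f ->
     sbounded sigma delta f /\ Sf_division sigma delta f) /\
  (sbounded sigma delta f -> Sf_division sigma delta f).
Proof.
move=> D_division delta_der f_monic size_f m_ge2 f_irr.
have f_gt1 : (1 < size f)%N by rewrite size_f ltnS ltnW.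
have division_of_bounded := Sf_division_of_bounded delta_der D_division f_monic f_gt1 f_irr.
split=> // sigma_surj nucleus.
have fC c : srem sigma delta f (smul sigma delta f c%:P) = 0.
  apply: (srem_smulC_of_right_nucleus delta_der D_division f_monic); first by rewrite size_f.
  by apply/nucleus; rewrite size_polyC leq_b1.
have f_bounded := sbounded_of_srem_smulC delta_der D_division f_monic sigma_surj fC.
by split; last exact: division_of_bounded.
Qed.
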